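(* Let $n,k$ be integers with $2<2k\le n$. The feasible set of the integer program $( * )$ is non-empty if and only if $\mathrm{Pet}(n,k)$ contains an odd cycle. Moreover, suppose $(\mathsf{u},\mathsf{v}_+,\mathsf{v}_-,r,t)$ is a solution of $( * )$. If $( * )$ has some trivial solution, then $g_{odd}(\mathrm{Pet}(n,k))=2r+1$; if all solutions of $( * )$ are nontrivial, then $g_{odd}(\mathrm{Pet}(n,k))=2r+3$.
   Context: For integers $n,k$ with $2<2k\le n$, the generalized Petersen graph $\mathrm{Pet}(n,k)$ has vertex set $\{u_0,\dots,u_{n-1}\}\cup\{v_0,\dots,v_{n-1}\}$ and edge set $\{u_iu_{i+1}\}\cup\{u_iv_i\}\cup\{v_iv_{i+k}\}$, indices modulo $n$. The integer program $( * )$ is: minimize $\mathsf{u}+\mathsf{v}_++\mathsf{v}_-$ over integers $\mathsf{u},\mathsf{v}_+,\mathsf{v}_-,r\ge 0$ and $t\in\mathbb{Z}$ subject to $\mathsf{u}+k(\mathsf{v}_+-\mathsf{v}_-)=tn$ and $\mathsf{u}+\mathsf{v}_++\mathsf{v}_-=2r+1$. A feasible point is any tuple satisfying these constraints; a solution is a minimizer; a solution is trivial if $\mathsf{u}=0$ or $\mathsf{v}_++\mathsf{v}_-=0$, and nontrivial otherwise (note all solutions have the same value $2r+1$). $g_{odd}(G)$ is the length of a shortest odd cycle of $G$. *)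

From HB Require Import structures.
From mathcomp Require Import all_boot all_order all_algebra.
Set Implicit Arguments. Unset Strict Implicit. Unset Printing Implicit Defensive.
Import Order.TTheory GRing.Theory Num.Theory.

(* Vertices of Pet(n,k): inl i = u_i, inr i = v_i, for i : 'I_n. *)
Definition pet_vertex (n : nat) : finType := ('I_n + 'I_n)%type.

Definition pet_adj (n k : nat) : rel (pet_vertex n) :=
  fun x y =>
    match x, y with
    | inl i, inl j => (val j == (val i + 1) %% n) || (val i == (val j + 1) %% n)
    | inl i, inr j => val i == val j
    | inr i, inl j => val i == val j
    | inr i, inr j => (val j == (val i + k) %% n) || (val i == (val j + k) %% n)
    end.

Arguments pet_adj : clear implicits.

Definition is_graph_cycle (T : eqType) (e : rel T) (c : seq T) : bool :=
  [&& 3 <= size c, uniq c & cycle e c].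

Definition has_odd_cycle (T : eqType) (e : rel T) : Prop :=
  exists c : seq T, is_graph_cycle e c /\ odd (size c).

Definition odd_girth_is (T : eqType) (e : rel T) (m : nat) : Prop :=
  (exists c : seq T, [/\ is_graph_cycle e c, odd (size c) & size c = m]) /\
  (forall c : seq T, is_graph_cycle e c -> odd (size c) -> m <= size c).

Definition ip_feasible (n k : nat) (u vp vm r : nat) (t : int) : Prop :=
  ((u%:Z + k%:Z * (vp%:Z - vm%:Z))%R = (t * n%:Z)%R) /\ u + vp + vm = 2 * r + 1.

Definition ip_solution (n k : nat) (u vp vm r : nat) (t : int) : Prop :=
  ip_feasible n k u vp vm r t /\
  (forall (u' vp' vm' r' : nat) (t' : int),
      ip_feasible n k u' vp' vm' r' t' -> u + vp + vm <= u' + vp' + vm').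

Definition ip_trivial (u vp vm : nat) : Prop := u = 0 \/ vp + vm = 0.

From mathcomp Require Import all_boot all_order all_algebra.
From mathcomp Require Import zify ring.
From Stdlib Require Import Classical.
Import GRing.Theory.

Set Implicit Arguments. Unset Strict Implicit. Unset Printing Implicit Defensive.

(* An odd closed walk of Pet(n,k) taking a forward and b backward outer steps, c forward and
   d backward inner steps and s spokes returns to its starting index, so a - b + k (c - d) is a
   multiple of n.  As s is even, (|a - b|, c, d) (with c and d swapped when b > a) is a feasible
   point of value at most the length minus s, and for s = 0 the walk stays on one rim, so the
   point is trivial.  Conversely every solution is realised by a cycle: (n, 0, 0) by the outer
   rim, (0, v, 0) by the inner cycle v_0 v_k v_2k ..., and a nontrivial (u, v, 0) by u outer
   steps, a spoke, v inner k-steps and a spoke back, of length u + v + 2 = 2r + 3.  Minimality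
   of the solution is what keeps these cycles simple, and the symmetry k <-> n - k of the inner
   rim turns (u, vp, vm) into (u, vm, vp). *)

Lemma odd_half_double m : odd m -> m = 2 * m./2 + 1.
Proof. by move=> m_odd; rewrite -{1}(odd_double_half m) m_odd; lia. Qed.

Lemma classical_ex_minn (P : nat -> Prop) :
  (exists m, P m) -> exists2 m, P m & forall m', P m' -> m <= m'.
Proof.
case=> m; elim: m {-2}m (leqnn m) => [|m IHm] r le_rm Pr.
  by exists r => // m' _; lia.
have [[r' [Pr' lt_r'r]] | no_smaller] := classic (exists r', P r' /\ r' < r).
  by apply: (IHm r') => //; lia.
exists r => // r' Pr'; rewrite leqNgt; apply/negP => lt_r'r.
by apply: no_smaller; exists r'.
Qed.

Section IntegerProgram.

Variables n k : nat.

Lemma feasible_of_step_counts a b c d (t : int) :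
  (a%:Z - b%:Z + k%:Z * (c%:Z - d%:Z) = t * n%:Z)%R -> odd (a + b + c + d) ->
  exists (u vp vm r : nat) (t' : int), [/\ ip_feasible n k u vp vm r t',
    2 * r + 1 <= a + b + c + d, (a + b = 0 -> u = 0) & (c + d = 0 -> vp + vm = 0)].
Proof.
move=> winding_eq odd_abcd.
have odd_diff e : e <= minn a b -> odd (a + b + c + d - e.*2).
  by move=> le_e; rewrite oddB ?odd_double ?addbF //; lia.
have [le_ba | lt_ab] := leqP b a.
- exists (a - b), c, d, (a - b + c + d)./2, t; split; try lia; split.
  + by rewrite -subzn // winding_eq.
  + apply: odd_half_double; rewrite (_ : _ + d = a + b + c + d - b.*2) ?odd_diff; lia.
- exists (b - a), d, c, (b - a + d + c)./2, (- t)%R; split; try lia; split.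
  + rewrite -subzn ?(ltnW lt_ab) // mulNr -winding_eq; ring.
  + apply: odd_half_double; rewrite (_ : _ + c = a + b + c + d - a.*2) ?odd_diff; lia.
Qed.

Lemma ip_solution_le u vp vm r t u' vp' vm' r' t' :
  ip_solution n k u vp vm r t -> ip_feasible n k u' vp' vm' r' t' -> r <= r'.
Proof. by move=> [[_ value] min_value] /[dup] [[_ value']] /min_value; lia. Qed.

Lemma ip_solution_of_feasible u vp vm r t u' vp' vm' t' :
  ip_solution n k u vp vm r t -> ip_feasible n k u' vp' vm' r t' -> ip_solution n k u' vp' vm' r t'.
Proof.
move=> sol feas'; split=> // u'' vp'' vm'' r'' t'' /[dup] [[_ value'']] /(ip_solution_le sol).
by case: feas' => _; lia.
Qed.

Lemma ip_solution_exists :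
  (exists (u vp vm r : nat) (t : int), ip_feasible n k u vp vm r t) ->
  exists (u vp vm r : nat) (t : int), ip_solution n k u vp vm r t.
Proof.
case=> u [vp [vm [r [t feas]]]].
have [r0 [u0 [vp0 [vm0 [t0 feas0]]]] min_r0] :
    exists2 r0, exists (u vp vm : nat) (t : int), ip_feasible n k u vp vm r0 t &
      forall r', (exists (u vp vm : nat) (t : int), ip_feasible n k u vp vm r' t) -> r0 <= r'.
  by apply: classical_ex_minn; exists r, u, vp, vm, t.
exists u0, vp0, vm0, r0, t0; split=> // u' vp' vm' r' t' feas'.
have : r0 <= r' by apply: min_r0; exists u', vp', vm', t'.
by case: feas0 => _; case: feas' => _; lia.
Qed.

Lemma ip_solution_one_way u vp vm r t : ip_solution n k u vp vm r t -> vp = 0 \/ vm = 0.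
Proof.
move=> sol; have [[winding value] _] := sol.
have [vp0 | vp_gt0] := posnP vp; first by left.
have [vm0 | vm_gt0] := posnP vm; first by right.
have : r <= r.-1; last lia.
apply: (ip_solution_le sol (u' := u) (vp' := vp.-1) (vm' := vm.-1) (t' := t)); split; last lia.
by rewrite -winding !predn_int //; ring.
Qed.

Lemma ip_solution_u_ge_n u vp vm r t : 0 < n -> ip_solution n k u vp vm r t -> n <= u ->
  [/\ u = n, vp = 0 & vm = 0].
Proof.
move=> n_gt0 sol le_nu; have [[winding value] _] := sol.
have [n_odd | n_even] := boolP (odd n).
  have : r <= n./2; last by have := odd_half_double n_odd; split; lia.
  apply: (ip_solution_le sol (u' := n) (vp' := 0) (vm' := 0) (t' := 1%R)).
  by split; [rewrite subrr mulr0 addr0 mul1r | rewrite !addn0 -odd_half_double].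
have : r <= r - n./2; last by rewrite -[n](odd_double_half) (negbTE n_even) in n_gt0; lia.
apply: (ip_solution_le sol (u' := u - n) (vp' := vp) (vm' := vm) (t' := (t - 1)%R)).
split; last by rewrite -[n](odd_double_half) (negbTE n_even) in le_nu *; lia.
by rewrite -subzn // mulrBl -winding; ring.
Qed.

Lemma ip_solution_inner_period u v r t d : ip_solution n k u v 0 r t ->
  0 < d <= v -> d * k %% n = 0 -> u = 0 /\ d = v.
Proof.
move=> sol /andP[d_gt0 le_dv] dk_mod; have [[winding value] _] := sol.
have dk_mul : (k%:Z * d%:Z = Posz (d * k %/ n) * n%:Z)%R.
  by rewrite -!PoszM mulnC {1}(divn_eq (d * k) n) dk_mod addn0.
have [d_odd | d_even] := boolP (odd d).
  have : r <= d./2; last by have := odd_half_double d_odd; lia.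
  apply: (ip_solution_le sol (u' := 0) (vp' := d) (vm' := 0) (t' := Posz (d * k %/ n))).
  split; last by rewrite addn0 add0n -odd_half_double.
  by rewrite add0r subr0 dk_mul.
have : r <= r - d./2; last by rewrite -[d](odd_double_half) (negbTE d_even) in d_gt0; lia.
apply: (ip_solution_le sol (u' := u) (vp' := v - d) (vm' := 0) (t' := (t - Posz (d * k %/ n))%R)).
split; last by rewrite -[d](odd_double_half) (negbTE d_even) in le_dv *; lia.
by rewrite -subzn // mulrBl -winding -dk_mul; ring.
Qed.

End IntegerProgram.

Lemma pet_adj_reflect n k : k <= n -> pet_adj n (n - k) =2 pet_adj n k.
Proof.
move=> le_kn [i|i] [j|j] //=.
have reflect_step a b : a < n -> b < n -> (b == (a + (n - k)) %% n) = (a == (b + k) %% n).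
  move=> lt_an lt_bn; apply/eqP/eqP => ->.
  - by rewrite modnDml -addnA subnK // modnDr modn_small.
  - by rewrite modnDml -addnA subnKC // modnDr modn_small.
by rewrite !reflect_step // orbC.
Qed.

Lemma graph_cycle_reflect n k c : k <= n ->
  is_graph_cycle (pet_adj n (n - k)) c = is_graph_cycle (pet_adj n k) c.
Proof. by move=> le_kn; rewrite /is_graph_cycle (eq_cycle (pet_adj_reflect le_kn)). Qed.

Lemma ip_feasible_reflect n k u vp vm r t : k <= n -> ip_feasible n k u vp vm r t ->
  ip_feasible n (n - k) u vm vp r (t + vm%:Z - vp%:Z)%R.
Proof.
move=> le_kn [winding value]; split; last lia.
rewrite -subzn // (_ : (t + vm%:Z - vp%:Z) * n%:Z = t * n%:Z + (vm%:Z - vp%:Z) * n%:Z)%R; last ring.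
by rewrite -winding; ring.
Qed.

Lemma ip_solution_reflect n k u vp vm r t : k <= n -> ip_solution n k u vp vm r t ->
  ip_solution n (n - k) u vm vp r (t + vm%:Z - vp%:Z)%R.
Proof.
move=> le_kn [feas min_value]; split; first exact: ip_feasible_reflect.
move=> u' vp' vm' r' t' /(ip_feasible_reflect (leq_subr k n)).
by rewrite subKn // => /min_value; lia.
Qed.

Section OddClosedWalks.

Variables n k : nat.

Definition rim_index (x : pet_vertex n) : nat := match x with inl i | inr i => val i end.

Definition on_inner_rim (x : pet_vertex n) : bool := if x is inr _ then true else false.

(* 0 and 1: an outer edge u_i u_(i+1) traversed forwards and backwards;
   2 and 3: an inner edge v_i v_(i+k) traversed forwards and backwards; 4: a spoke. *)
Definition step_kind (x y : pet_vertex n) : nat :=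
  match x, y with
  | inl i, inl j => if val j == (val i + 1) %% n then 0 else 1
  | inr i, inr j => if val j == (val i + k) %% n then 2 else 3
  | _, _ => 4
  end.

Definition steps (K : nat) (x : pet_vertex n) (q : seq (pet_vertex n)) : nat :=
  count_mem K (pairmap step_kind x q).

Definition winding (x : pet_vertex n) (q : seq (pet_vertex n)) : int :=
  ((steps 0 x q)%:Z - (steps 1 x q)%:Z + k%:Z * ((steps 2 x q)%:Z - (steps 3 x q)%:Z))%R.

Lemma winding_cons x y q : winding x (y :: q) = (winding x [:: y] + winding y q)%R.
Proof. rewrite /winding /steps /=; lia. Qed.

Lemma step_winding x y : pet_adj n k x y ->
  exists t : int, winding x [:: y] = ((rim_index y)%:Z - (rim_index x)%:Z + t * n%:Z)%R.
Proof.
rewrite /winding /steps; case: x => i; case: y => j /=.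
- case: ifP => [/eqP -> _ | _ /= /eqP ->].
  + by exists (Posz ((i + 1) %/ n)); have := divn_eq (i + 1) n; lia.
  + by exists (- Posz ((j + 1) %/ n))%R; have := divn_eq (j + 1) n; lia.
- by move=> /eqP ->; exists 0%R; lia.
- by move=> /eqP ->; exists 0%R; lia.
- case: ifP => [/eqP -> _ | _ /= /eqP ->].
  + by exists (Posz ((i + k) %/ n)); have := divn_eq (i + k) n; lia.
  + by exists (- Posz ((j + k) %/ n))%R; have := divn_eq (j + k) n; lia.
Qed.

Lemma path_winding x q : path (pet_adj n k) x q ->
  exists t : int, winding x q = ((rim_index (last x q))%:Z - (rim_index x)%:Z + t * n%:Z)%R.
Proof.
elim: q x => [|y q IHq] x /=; first by exists 0%R; rewrite /winding /steps /=; lia.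
rewrite winding_cons => /andP[/step_winding [t1 ->] /IHq [t2 ->]].
by exists (t1 + t2)%R; ring.
Qed.

Lemma odd_spokes x q : odd (steps 4 x q) = on_inner_rim x (+) on_inner_rim (last x q).
Proof.
elim: q x => [|y q IHq] x; first by rewrite addbb.
rewrite /steps /= oddD -/(steps 4 y q) IHq.
by case: x => i; case: y => j /=; try case: ifP; case: on_inner_rim.
Qed.

Lemma spokeless_walk_one_rim x q : steps 4 x q = 0 ->
  if on_inner_rim x then steps 0 x q + steps 1 x q = 0 else steps 2 x q + steps 3 x q = 0.
Proof.
elim: q x => [|y q IHq] x; first by case: on_inner_rim.
have := IHq y; rewrite /steps /=.
by case: x => i; case: y => j /=; try case: ifP => _ /=; lia.
Qed.

Lemma steps_sum x q : steps 0 x q + steps 1 x q + steps 2 x q + steps 3 x q + steps 4 x q = size q.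
Proof.
elim: q x => [|y q IHq] x //=; rewrite -(IHq y) /steps /=.
by case: x => i; case: y => j /=; try case: ifP; lia.
Qed.

End OddClosedWalks.

Lemma odd_cycle_feasible n k c : is_graph_cycle (pet_adj n k) c -> odd (size c) ->
  exists (u vp vm r : nat) (t : int), [/\ ip_feasible n k u vp vm r t,
    2 * r + 1 <= size c & ip_trivial u vp vm \/ 2 * r + 3 <= size c].
Proof.
case: c => [|x p] /and3P[_ _ closed] // odd_c.
have [t winding_eq] := path_winding closed.
have := steps_sum k x (rcons p x); have := odd_spokes k x (rcons p x).
have := @spokeless_walk_one_rim n k x (rcons p x).
rewrite last_rcons addbb size_rcons; rewrite last_rcons subrr add0r in winding_eq.
move: winding_eq; rewrite /winding.
set a := steps _ 0 _ _; set b := steps _ 1 _ _; set c := steps _ 2 _ _; set d := steps _ 3 _ _.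
set s := steps _ 4 _ _ => winding_eq one_rim s_even sizes.
clearbody a b c d s.
have [|u [vp [vm [r [t' [feas small outer_only inner_only]]]]]] :=
  feasible_of_step_counts winding_eq.
  have : odd (a + b + c + d + s) by rewrite sizes.
  by rewrite oddD s_even addbF.
have -> : size (x :: p) = a + b + c + d + s by rewrite sizes.
exists u, vp, vm, r, t'; split=> //; first lia.
have [s0 | s_gt0] := posnP s; last by right; have := odd_double_half s; rewrite s_even; lia.
by left; case: on_inner_rim (one_rim s0) => [/outer_only | /inner_only]; [left | right].
Qed.

Lemma graph_cycle_map_iota (T : eqType) (e : rel T) (f : nat -> T) m :
  2 < m -> f m = f 0 -> (forall i, i < m -> e (f i) (f i.+1)) ->
  (forall i j, i < m -> j < m -> f i = f j -> i = j) ->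
  is_graph_cycle e [seq f i | i <- iota 0 m].
Proof.
move=> m_gt2 f_m f_step f_inj; apply/and3P; split.
- by rewrite size_map size_iota.
- by rewrite map_inj_in_uniq ?iota_uniq // => i j; rewrite !mem_iota !add0n; apply: f_inj.
case: m m_gt2 f_m f_step {f_inj} => // m _ f_m f_step.
rewrite /= -{2}f_m -map_rcons.
rewrite (_ : rcons (iota 1 m) m.+1 = iota 1 m.+1) ?path_map; last first.
  by rewrite -cats1 -[m.+1]addn1 iotaD /= add1n addn1.
apply/(pathP 0) => i; rewrite size_iota => lt_im.
change (0 :: iota 1 m.+1) with (iota 0 m.+2).
by rewrite !nth_iota ?add0n ?add1n; [apply: f_step | lia | lia].
Qed.

Section RimCycles.

Variables n k : nat.
Hypothesis n_gt0 : 0 < n.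

Definition ord_mod (i : nat) : 'I_n := Ordinal (ltn_pmod i n_gt0).

Local Notation outer i := (inl (ord_mod i) : pet_vertex n).
Local Notation inner i := (inr (ord_mod i) : pet_vertex n).

Lemma adj_outer_step i : pet_adj n k (outer i) (outer i.+1).
Proof. by rewrite /= modnDml addn1 eqxx. Qed.

Lemma adj_inner_step i : pet_adj n k (inner i) (inner (i + k)).
Proof. by rewrite /= modnDml eqxx. Qed.

Lemma adj_spoke i j : i %% n = j %% n ->
  pet_adj n k (outer i) (inner j) /\ pet_adj n k (inner j) (outer i).
Proof. by move=> /= ->. Qed.

Lemma mulk_modn_inj m : (forall d, 0 < d < m -> d * k %% n != 0) ->
  forall i j, i < m -> j < m -> i * k %% n = j * k %% n -> i = j.
Proof.
move=> no_period.
suff le_inj i j : i <= j -> j < m -> i * k %% n = j * k %% n -> i = j.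
  move=> i j lt_im lt_jm eq_ij; have [le_ij | /ltnW le_ji] := leqP i j.
  - exact: le_inj.
  - exact/esym/le_inj.
move=> le_ij lt_jm eq_ij; apply/eqP; rewrite eqn_leq le_ij leqNgt; apply/negP => lt_ij.
have split_j : j * k = i * k + (j - i) * k by rewrite -mulnDl subnKC.
have period : (j - i) * k %% n = 0.
  by move/eqP: eq_ij; rewrite split_j -{1}[i * k]addn0 eqn_modDl mod0n => /eqP/esym.
by move: period; apply/eqP/no_period; lia.
Qed.

Lemma outer_cycle : 2 < n -> exists2 c, is_graph_cycle (pet_adj n k) c & size c = n.
Proof.
move=> n_gt2; exists [seq outer i | i <- iota 0 n]; last by rewrite size_map size_iota.
apply: graph_cycle_map_iota => //.
- by congr inl; apply: val_inj; rewrite /= modnn mod0n.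
- by move=> i _; apply: adj_outer_step.
- by move=> i j lt_in lt_jn []; rewrite !modn_small.
Qed.

Lemma inner_cycle v : 2 < v -> v * k %% n = 0 -> (forall d, 0 < d < v -> d * k %% n != 0) ->
  exists2 c, is_graph_cycle (pet_adj n k) c & size c = v.
Proof.
move=> v_gt2 vk_mod no_period; exists [seq inner (j * k) | j <- iota 0 v]; last first.
  by rewrite size_map size_iota.
apply: graph_cycle_map_iota => //.
- by congr inr; apply: val_inj; rewrite /= vk_mod mod0n.
- by move=> j _; rewrite mulSnr; apply: adj_inner_step.
- by move=> i j lt_iv lt_jv [] /(mulk_modn_inj no_period); apply.
Qed.

Lemma spoke_cycle u v : 0 < u < n -> (u + v * k) %% n = 0 ->
  (forall d, 0 < d <= v -> d * k %% n != 0) ->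
  exists2 c, is_graph_cycle (pet_adj n k) c & size c = u + v + 2.
Proof.
move=> /andP[u_gt0 lt_un] uvk_mod no_period.
pose f i := if i <= u then outer i else if i <= u + v + 1 then inner (u + (i - u.+1) * k)
            else outer 0.
have f_outer i : i <= u -> f i = outer i by rewrite /f => ->.
have f_inner i : u < i <= u + v + 1 -> f i = inner (u + (i - u.+1) * k).
  by rewrite /f => /andP[lt_ui ->]; rewrite leqNgt lt_ui.
have f_end i : u + v + 1 < i -> f i = outer 0.
  move=> lt_i; have lt_ui : u < i by apply: leq_ltn_trans lt_i; rewrite -addnA leq_addr.
  by rewrite /f (leqNgt i u) (leqNgt i (u + v + 1)) lt_i lt_ui.
exists [seq f i | i <- iota 0 (u + v + 2)]; last by rewrite size_map size_iota.
apply: graph_cycle_map_iota; first lia.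
- by rewrite f_end ?f_outer //; lia.
- move=> i lt_i; have [lt_iu | le_ui] := ltnP i u.
    by rewrite !f_outer ?adj_outer_step // ltnW.
  have [eq_iu | lt_ui] := eqVneq i u.
    rewrite eq_iu f_outer // f_inner ?subnn ?mul0n ?addn0; last lia.
    exact: (adj_spoke (erefl _)).1.
  rewrite (f_inner i); last lia.
  have [lt_i_last | eq_i_last] := ltnP i (u + v + 1).
    rewrite (f_inner i.+1); last lia.
    rewrite (_ : i.+1 - u.+1 = (i - u.+1).+1) ?mulSnr ?addnA; last lia.
    exact: adj_inner_step.
  rewrite f_end; last lia.
  apply: (adj_spoke _).2; rewrite mod0n -uvk_mod; congr (_ %% _); congr (_ + _ * _); lia.
- move=> i j lt_i lt_j.
  have [le_iu | lt_ui] := leqP i u; have [le_ju | lt_uj] := leqP j u.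
  + by rewrite !f_outer // => -[]; rewrite !modn_small //; lia.
  + by rewrite (f_outer i) // (f_inner j); [discriminate | lia].
  + by rewrite (f_inner i) ?(f_outer j); [discriminate | lia..].
  rewrite (f_inner i) ?(f_inner j); [|lia..].
  case=> /eqP; rewrite eqn_modDl => /eqP eq_ij.
  have lt_iv : i - u.+1 < v.+1 by lia.
  have lt_jv : j - u.+1 < v.+1 by lia.
  have no_period' d : 0 < d < v.+1 -> d * k %% n != 0 by rewrite ltnS; apply: no_period.
  by have := mulk_modn_inj no_period' lt_iv lt_jv eq_ij; lia.
Qed.

End RimCycles.

Lemma modn_eq0_of_int_mul a n (t : int) : (a%:Z = t * n%:Z)%R -> a %% n = 0.
Proof.
move=> a_eq; apply/eqP; change (n %| a)%N.
by rewrite -[(n %| a)%N]/(n%:Z %| a%:Z)%Z a_eq dvdz_mull.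
Qed.

Lemma outer_solution_cycle n k u r t : 2 < n -> ip_solution n k u 0 0 r t ->
  exists2 c, is_graph_cycle (pet_adj n k) c & size c = 2 * r + 1.
Proof.
move=> n_gt2 sol; have [[winding value] _] := sol.
have n_gt0 : 0 < n by lia.
have u_mod : u %% n = 0.
  by apply: (modn_eq0_of_int_mul (t := t)); rewrite -winding subrr mulr0 addr0.
have le_nu : n <= u by apply: dvdn_leq; [lia | apply/eqP].
have [u_n _ _] := ip_solution_u_ge_n n_gt0 sol le_nu.
have [c cycle_c size_c] := outer_cycle k n_gt0 n_gt2.
by exists c; lia.
Qed.

Lemma inner_solution_cycle n k v r t : 0 < k < n -> ip_solution n k 0 v 0 r t ->
  exists2 c, is_graph_cycle (pet_adj n k) c & size c = 2 * r + 1.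
Proof.
move=> /andP[k_gt0 lt_kn] sol; have [[winding value] _] := sol.
have n_gt0 : 0 < n by lia.
have vk_mod : v * k %% n = 0.
  by apply: (modn_eq0_of_int_mul (t := t)); rewrite -winding add0r subr0 PoszM mulrC.
have v_ne1 : v != 1 by apply/eqP => v1; move: vk_mod; rewrite v1 mul1n modn_small //; lia.
have no_period d : 0 < d < v -> d * k %% n != 0.
  move=> /andP[d_gt0 lt_dv]; apply/eqP => /(ip_solution_inner_period sol) period.
  by have [|_ eq_dv] := period; lia.
have v_gt2 : 2 < v by lia.
have [c cycle_c size_c] := inner_cycle n_gt0 v_gt2 vk_mod no_period.
by exists c; lia.
Qed.

Lemma spoke_solution_cycle n k u v r t : 0 < n -> ip_solution n k u v 0 r t -> 0 < u -> 0 < v ->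
  exists2 c, is_graph_cycle (pet_adj n k) c & size c = 2 * r + 3.
Proof.
move=> n_gt0 sol u_gt0 v_gt0; have [[winding value] _] := sol.
have lt_un : u < n.
  by rewrite ltnNge; apply/negP => /(ip_solution_u_ge_n n_gt0 sol) [_ v0 _]; lia.
have uvk_mod : (u + v * k) %% n = 0.
  by apply: (modn_eq0_of_int_mul (t := t)); rewrite -winding subr0 PoszD PoszM mulrC.
have no_period d : 0 < d <= v -> d * k %% n != 0.
  by move=> d_range; apply/eqP => /(ip_solution_inner_period sol d_range) [u0 _]; lia.
have u_range : 0 < u < n by rewrite u_gt0.
have [c cycle_c size_c] := spoke_cycle n_gt0 u_range uvk_mod no_period.
by exists c; lia.
Qed.

Lemma trivial_solution_cycle n k u vp vm r t : 0 < k < n -> 2 < n ->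
  ip_solution n k u vp vm r t -> ip_trivial u vp vm ->
  exists2 c, is_graph_cycle (pet_adj n k) c & size c = 2 * r + 1.
Proof.
move=> k_bounds n_gt2 sol [u0 | /eqP/[!addn_eq0]/andP[/eqP vp0 /eqP vm0]]; last first.
  by rewrite vp0 vm0 in sol; apply: outer_solution_cycle sol.
rewrite u0 in sol; have [vp0 | vm0] := ip_solution_one_way sol; last first.
  by rewrite vm0 in sol; apply: inner_solution_cycle k_bounds sol.
rewrite vp0 in sol; have le_kn : k <= n by lia.
have reflected_bounds : 0 < n - k < n by lia.
have [c cycle_c size_c] := inner_solution_cycle reflected_bounds (ip_solution_reflect le_kn sol).
by exists c; rewrite // -(graph_cycle_reflect _ le_kn).
Qed.

Lemma nontrivial_solution_cycle n k u vp vm r t : 0 < k < n ->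
  ip_solution n k u vp vm r t -> ~ ip_trivial u vp vm ->
  exists2 c, is_graph_cycle (pet_adj n k) c & size c = 2 * r + 3.
Proof.
move=> k_bounds sol nontriv; have n_gt0 : 0 < n by lia.
have u_gt0 : 0 < u by rewrite lt0n; apply/eqP => u0; apply: nontriv; left.
have vpm_gt0 : 0 < vp + vm by rewrite lt0n; apply/eqP => vpm0; apply: nontriv; right.
have [vp0 | vm0] := ip_solution_one_way sol; last first.
  by rewrite vm0 in sol vpm_gt0; apply: spoke_solution_cycle sol u_gt0 _; lia.
rewrite vp0 in sol vpm_gt0; have le_kn : k <= n by lia.
have [c cycle_c size_c] :=
  spoke_solution_cycle n_gt0 (ip_solution_reflect le_kn sol) u_gt0 vpm_gt0.
by exists c; rewrite // -(graph_cycle_reflect _ le_kn).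
Qed.

Lemma ip_solution_odd_cycle_ge n k u vp vm r t c : ip_solution n k u vp vm r t ->
  is_graph_cycle (pet_adj n k) c -> odd (size c) -> 2 * r + 1 <= size c.
Proof.
move=> sol /odd_cycle_feasible/[apply] -[u' [vp' [vm' [r' [t' [feas' le_c _]]]]]].
by have := ip_solution_le sol feas'; lia.
Qed.

Lemma nontrivial_ip_solution_odd_cycle_ge n k u vp vm r t c : ip_solution n k u vp vm r t ->
  (forall (u' vp' vm' r' : nat) (t' : int),
     ip_solution n k u' vp' vm' r' t' -> ~ ip_trivial u' vp' vm') ->
  is_graph_cycle (pet_adj n k) c -> odd (size c) -> 2 * r + 3 <= size c.
Proof.
move=> sol all_nontriv /odd_cycle_feasible/[apply].
case=> u' [vp' [vm' [r' [t' [feas' le_c triv_or_long]]]]].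
have le_rr' := ip_solution_le sol feas'.
case: triv_or_long => [triv' | long]; last lia.
suff lt_rr' : r < r' by lia.
rewrite ltn_neqAle le_rr' andbT; apply/eqP => eq_rr'.
apply: (all_nontriv u' vp' vm' r' t') triv'.
by rewrite -eq_rr' in feas' *; apply: ip_solution_of_feasible sol feas'.
Qed.

Theorem theorem8 (n k : nat) (hk : 2 < 2 * k) (hkn : 2 * k <= n) :
  ((exists (u vp vm r : nat) (t : int), ip_feasible n k u vp vm r t)
     <-> has_odd_cycle (pet_adj n k)) /\
  (forall (u vp vm r : nat) (t : int), ip_solution n k u vp vm r t ->
     ((exists (u' vp' vm' r' : nat) (t' : int),
          ip_solution n k u' vp' vm' r' t' /\ ip_trivial u' vp' vm') ->
        odd_girth_is (pet_adj n k) (2 * r + 1)) /\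
     ((forall (u' vp' vm' r' : nat) (t' : int),
          ip_solution n k u' vp' vm' r' t' -> ~ ip_trivial u' vp' vm') ->
        odd_girth_is (pet_adj n k) (2 * r + 3))).
Proof.
have k_bounds : 0 < k < n by apply/andP; split; lia.
have n_gt2 : 2 < n by lia.
have odd_2r1 r : odd (2 * r + 1) by rewrite oddD oddM.
have odd_2r3 r : odd (2 * r + 3) by rewrite oddD oddM.
split; [split|].
- case/ip_solution_exists=> u [vp [vm [r [t sol]]]].
  have [triv | nontriv] := classic (ip_trivial u vp vm).
    have [c cycle_c size_c] := trivial_solution_cycle k_bounds n_gt2 sol triv.
    by exists c; rewrite size_c.
  have [c cycle_c size_c] := nontrivial_solution_cycle k_bounds sol nontriv.
  by exists c; rewrite size_c.
- case=> c [cycle_c odd_c].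
  have [u [vp [vm [r [t [feas _ _]]]]]] := odd_cycle_feasible cycle_c odd_c.
  by exists u, vp, vm, r, t.
move=> u vp vm r t sol; split.
  case=> u' [vp' [vm' [r' [t' [sol' triv']]]]].
  have eq_rr' : r = r'.
    by apply/eqP; rewrite eqn_leq (ip_solution_le sol sol'.1) (ip_solution_le sol' sol.1).
  have [c cycle_c size_c] := trivial_solution_cycle k_bounds n_gt2 sol' triv'.
  split; first by exists c; rewrite size_c eq_rr'.
  by move=> c'; apply: ip_solution_odd_cycle_ge sol.
move=> all_nontriv.
have [c cycle_c size_c] := nontrivial_solution_cycle k_bounds sol (all_nontriv _ _ _ _ _ sol).
split; first by exists c; rewrite size_c.
by move=> c'; apply: nontrivial_ip_solution_odd_cycle_ge sol all_nontriv.
Qed.
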